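(* Suppose that a dumbbell, with holes $H$, $H'$ and path $P=x\dots x'$, is the underlying graph of some oriented graph $G$ derived from a Burling tree $(T,r,\ell,c)$. Then either $x$ is not a subordinate vertex of $H$ or $x'$ is not a subordinate vertex of $H'$.
   Context: Graphs are finite, without loops or multiple edges; oriented graphs have no pair of opposite arcs. A hole is an induced cycle of length at least $4$. A dumbbell is a graph made of a path $P=x\dots x'$ (possibly $x=x'$), a hole $H$ through $x$ and a hole $H'$ through $x'$, such that $V(H)\cap V(P)=\{x\}$, $V(H')\cap V(P)=\{x'\}$, $V(H)\cap V(H')=\{x\}\cap\{x'\}$, and there are no edges other than those of $P$, $H$ and $H'$. In a rooted tree $T$ with root $r$, each non-root vertex $v$ has a parent $p(v)$; children, leaves, ancestors and descendants are as usual. A branch is a sequence $v_1\dots v_k$ ($k\ge0$) with $v_i$ the parent of $v_{i+1}$; it starts at $v_1$. A Burling tree is a 4-tuple $(T,r,\ell,c)$: $T$ a rooted tree with root $r$; $\ell$ assigns to each non-leaf vertex $v$ one of its children $\ell(v)$ (the last-born of $v$); $c$ assigns to every vertex $v$ that is neither the root nor a last-born the vertex-set of a (possibly empty) branch starting at $\ell(p(v))$, and $c(v)=\emptyset$ if $v$ is the root or a last-born. The oriented graph fully derived from it has vertex-set $V(T)$ and an arc $uv$ iff $v\in c(u)$; an oriented graph is derived from the Burling tree if it is an induced subgraph of the fully derived one. A hole of an oriented graph means a hole of its underlying graph. If $G$ is derived from $T$ and $H$ is a hole of $G$, then (as established in the paper) $H$ with the inherited orientation has exactly two sources, called its antennas,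 and exactly two sinks; exactly one of these sinks is adjacent to both antennas and is an ancestor in $T$ of all vertices of $H$ other than the antennas: it is the pivot of $H$. A vertex of $H$ is subordinate if it is neither the pivot nor an antenna of $H$. *)

From mathcomp Require Import all_boot.
Set Implicit Arguments. Unset Strict Implicit. Unset Printing Implicit Defensive.

Section Burling.
Variable V : finType.

Fixpoint piter (par : V -> option V) (n : nat) (v : V) : option V :=
  match n with 0 => Some v | n'.+1 => obind par (piter par n' v) end.

Definition ancestor (par : V -> option V) (u v : V) : Prop :=
  exists n, piter par n v = Some u.

Definition childrel (par : V -> option V) : rel V := fun a b => par b == Some a.

Definition is_branch (par : V -> option V) (s : seq V) : bool :=
  sorted (childrel par) s.

Record burling_tree := BurlingTree {
  root : V;
  par : V -> option V;
  lb : V -> option V;                  (* last-born child; None exactly at leaves *)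
  bc : V -> {set V};
  par_root : par root = None;
  par_nonroot : forall v, v != root -> par v <> None;
  root_anc : forall v, ancestor par root v;
  lb_child : forall v w, lb v = Some w -> par w = Some v;
  lb_leaf : forall v, lb v = None <-> (forall w, par w <> Some v);
  bc_root : bc root = set0;
  bc_lastborn : forall u v, lb u = Some v -> bc v = set0;
  bc_branch : forall u v, par v = Some u -> lb u <> Some v ->
     exists s : seq V, is_branch par s /\ (s = [::] \/ ohead s = lb u)
                       /\ bc v = [set y | y \in s]
}.

(* arcs of the fully derived oriented graph *)
Definition arc (B : burling_tree) (u v : V) : bool := v \in bc B u.

(* underlying graph of the oriented graph G derived from B, induced on S *)
Definition ugraph (B : burling_tree) (S : {set V}) : rel V :=
  fun u v => [&& u \in S, v \in S & arc B u v || arc B v u].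

Definition hedge (hs : seq V) (u v : V) : bool :=
  ((u \in hs) && (v == next hs u)) || ((v \in hs) && (u == next hs v)).

Definition pedge (ps : seq V) (u v : V) : bool :=
  infix [:: u; v] ps || infix [:: v; u] ps.

Definition hole (adj : rel V) (hs : seq V) : Prop :=
  [/\ uniq hs, 4 <= size hs &
      forall u v, u \in hs -> v \in hs -> adj u v = hedge hs u v].

Definition dumbbell (adj : rel V) (S : {set V})
    (hs hs' ps : seq V) (x x' : V) : Prop :=
  [/\ hole adj hs /\ hole adj hs',
      [/\ uniq ps, ohead ps = Some x, last x ps = x' & sorted adj ps],
      [/\ [set v | v \in hs] :&: [set v | v \in ps] = [set x],
          [set v | v \in hs'] :&: [set v | v \in ps] = [set x'] &
          [set v | v \in hs] :&: [set v | v \in hs'] = [set x] :&: [set x'] ],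
      S = [set v | v \in hs ++ hs' ++ ps] &
      forall u v, adj u v = [|| hedge hs u v, hedge hs' u v | pedge ps u v] ].

Definition hsource (B : burling_tree) (hs : seq V) (v : V) : bool :=
  [&& v \in hs, arc B v (next hs v) & arc B v (prev hs v)].
Definition hsink (B : burling_tree) (hs : seq V) (v : V) : bool :=
  [&& v \in hs, arc B (next hs v) v & arc B (prev hs v) v].

Definition pivot (B : burling_tree) (hs : seq V) (z : V) : Prop :=
  [/\ hsink B hs z,
      forall a, hsource B hs a -> arc B z a || arc B a z &
      forall w, w \in hs -> ~~ hsource B hs w -> ancestor (par B) z w].

Definition subordinate (B : burling_tree) (hs : seq V) (v : V) : Prop :=
  [/\ v \in hs, ~~ hsource B hs v & ~ pivot B hs v].

End Burling.

(* If x is subordinate in H, some vertex z of H other than x is an ancestor of x in T: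
   a non-antenna vertex of a hole without a proper ancestor in the hole is its pivot.
   Being a proper descendant of z propagates along an edge to every vertex that is
   neither z nor adjacent to z, because an arc u -> v puts v below the last-born sibling
   of u.  All vertices of P and H' other than x lie outside H, so walking from x along P
   and around H' shows that z is an ancestor of every vertex of H'.  Symmetrically, if x'
   is subordinate in H', a vertex z' of H' is an ancestor of every vertex of H.  Then
   z = z' lies in both holes, hence equals x: a contradiction. *)

From mathcomp Require Import all_boot.
From Stdlib Require Import Classical.
Set Implicit Arguments. Unset Strict Implicit. Unset Printing Implicit Defensive.

Section BurlingTree.
Variables (V : finType) (B : burling_tree V).
Local Notation par := (par B).
Local Notation anc := (ancestor par).
Implicit Types a b c p u v y z : V.

Lemma piter_add m n v : piter par (m + n) v = obind (piter par m) (piter par n v).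
Proof. by elim: m v => [|m IH] v /=; [case: piter | rewrite IH; case: piter]. Qed.

Lemma piter_root n : piter par n.+1 (root B) = None.
Proof. by rewrite -addn1 piter_add /= par_root. Qed.

Lemma root_reachable v : exists n, piter par n v == Some (root B).
Proof. by have [n /eqP] := root_anc B v; exists n. Qed.

Definition depth v := ex_minn (root_reachable v).

Lemma depthP v : piter par (depth v) v = Some (root B).
Proof. by rewrite /depth; case: ex_minnP => n /eqP. Qed.

Lemma root_piter_inj v m n :
  piter par m v = Some (root B) -> piter par n v = Some (root B) -> m = n.
Proof.
wlog le_mn : m n / m <= n => [sym|hm].
  by case/orP: (leq_total m n) => /sym H hm hn; [|symmetry]; apply: H.
rewrite -(subnK le_mn) piter_add hm /=.
by case: (n - m) => // k; rewrite piter_root.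
Qed.

Lemma depth_piter k a b : piter par k b = Some a -> depth b = depth a + k.
Proof. by move=> h; apply: (root_piter_inj (depthP b)); rewrite piter_add h /= depthP. Qed.

Lemma depth_par c p : par c = Some p -> depth c = (depth p).+1.
Proof. by move=> h; rewrite (@depth_piter 1 p c h) addn1. Qed.

Lemma anc_refl v : anc v v.
Proof. by exists 0. Qed.

Lemma anc_trans u v w : anc u v -> anc v w -> anc u w.
Proof. by move=> [m hm] [n hn]; exists (m + n); rewrite piter_add hn /= hm. Qed.

Lemma anc_par c p : par c = Some p -> anc p c.
Proof. by exists 1. Qed.

Lemma anc_depth u v : anc u v -> depth u <= depth v.
Proof. by move=> [k /depth_piter ->]; apply: leq_addr. Qed.

Lemma anc_depth_eq u v : anc u v -> depth v <= depth u -> u = v.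
Proof.
move=> [[|k] hk]; first by case: hk.
by rewrite (depth_piter hk) addnS ltnNge leq_addr.
Qed.

Lemma anc_antisym u v : anc u v -> anc v u -> u = v.
Proof. by move=> uv /anc_depth; apply: anc_depth_eq. Qed.

Lemma anc_strict_par a c p : anc a c -> a != c -> par c = Some p -> anc a p.
Proof.
move=> [[|k] hk] ne hp; first by move: ne; case: hk => ->; rewrite eqxx.
by exists k; rewrite -hk -addn1 piter_add /= hp.
Qed.

Lemma anc_total a b y : anc a y -> anc b y -> anc a b \/ anc b a.
Proof.
move=> [m hm] [n hn]; case/orP: (leq_total m n) => le.
  by right; exists (n - m); move: hn; rewrite -(subnK le) piter_add hm addnK.
by left; exists (m - n); move: hm; rewrite -(subnK le) piter_add hn addnK.
Qed.

Lemma sibling_anc a b q : par a = Some q -> par b = Some q -> anc a b -> a = b.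
Proof.
by move=> /depth_par ha /depth_par hb ab; apply: anc_depth_eq ab _; rewrite ha hb.
Qed.

Lemma branch_anc_head a s y : is_branch par (a :: s) -> y \in a :: s -> anc a y.
Proof.
elim: s a => [|b s IH] a; rewrite /is_branch.
  by move=> _; rewrite inE => /eqP ->; apply: anc_refl.
move=> /= /andP [/eqP hab hs]; rewrite inE => /predU1P [-> | hy]; first exact: anc_refl.
exact: anc_trans (anc_par hab) (IH b hs hy).
Qed.

Lemma branch_anc_last a s y : is_branch par (a :: s) -> y \in a :: s -> anc y (last a s).
Proof.
elim: s a y => [|b s IH] a y; rewrite /is_branch.
  by move=> _; rewrite inE => /eqP ->; apply: anc_refl.
move=> /= /andP [/eqP hab hs]; rewrite inE => /predU1P [-> | hy]; last exact: IH.
exact: anc_trans (anc_par hab) (IH b b hs (mem_head b s)).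
Qed.

Lemma branch_convex a s v y :
  is_branch par (a :: s) -> v \in a :: s -> anc a y -> anc y v -> y \in a :: s.
Proof.
elim: s a => [|b s IH] a; rewrite /is_branch.
  by move=> _; rewrite inE => /eqP -> ay ya; rewrite (anc_antisym ay ya) mem_head.
move=> /= /andP [/eqP hab hs]; rewrite inE => /predU1P [-> | hv] ay yv.
  by rewrite (anc_antisym ay yv) mem_head.
have [-> | nya] := eqVneq y a; first exact: mem_head.
have [yb | by'] := anc_total yv (branch_anc_head hs hv);
  last by rewrite inE (IH b hs hv by' yv) orbT.
have [<- | nyb] := eqVneq y b; first by rewrite !inE eqxx orbT.
by move: nya; rewrite (anc_antisym ay (anc_strict_par yb nyb hab)) eqxx.
Qed.

Lemma arc_branch u v : arc B u v -> exists p L s,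
  [/\ par u = Some p, lb B p = Some L, L != u, is_branch par (L :: s)
    & forall y, arc B u y = (y \in L :: s)].
Proof.
rewrite /arc => huv.
have [ur | nur] := eqVneq u (root B); first by move: huv; rewrite ur bc_root inE.
case hp: (par u) => [p|]; last by case: (par_nonroot nur).
have [hl | nl] := eqVneq (lb B p) (Some u); first by move: huv; rewrite (bc_lastborn hl) inE.
have [s [hs [hs0 hbc]]] := bc_branch hp (elimN eqP nl).
case: s hs hs0 hbc => [|L s] hs hs0 hbc; first by move: huv; rewrite hbc inE.
case: hs0 => // /= hL; exists p, L, s; split => //; last by move=> y; rewrite hbc inE.
by apply: contra_neq nl => <-.
Qed.

Lemma arc_lastborn_sibling u v : arc B u v -> exists p L,
  [/\ par u = Some p, par L = Some p, lb B p = Some L, L != u & anc L v]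
  /\ forall y, anc L y -> anc y v -> arc B u y.
Proof.
move=> huv; have [p [L [s [hp hL nLu hs arcE]]]] := arc_branch huv.
exists p, L; split; first split => //.
- exact: lb_child hL.
- by apply: branch_anc_head hs _; rewrite -arcE.
by move=> y Ly yv; rewrite arcE; apply: branch_convex hs _ Ly yv; rewrite -arcE.
Qed.

Lemma arc_comparable u v1 v2 : arc B u v1 -> arc B u v2 -> anc v1 v2 \/ anc v2 v1.
Proof.
move=> h1; have [p [L [s [_ _ _ hs arcE]]]] := arc_branch h1.
rewrite arcE => h2; move: h1; rewrite arcE => h1.
exact: anc_total (branch_anc_last hs h1) (branch_anc_last hs h2).
Qed.

Lemma arc_anc_incomparable u v : arc B u v -> ~ anc u v /\ ~ anc v u.
Proof.
case/arc_lastborn_sibling=> p [L [[hu hL _ nLu Lv] _]].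
have sib y : anc u y -> anc L y -> False.
  move=> uy Ly; move/eqP: nLu; apply.
  case: (anc_total uy Ly) => h; [exact/esym/(sibling_anc hu hL h) | exact: sibling_anc hL hu h].
by split=> [uv | vu]; [apply: sib uv Lv | apply: sib (anc_refl u) (anc_trans Lv vu)].
Qed.

Lemma anc_arc z u v : anc z u -> z != u -> arc B u v -> anc z v.
Proof.
move=> zu nzu /arc_lastborn_sibling [p [L [[hu hL _ _ Lv] _]]].
exact: anc_trans (anc_strict_par zu nzu hu) (anc_trans (anc_par hL) Lv).
Qed.

Lemma arc2_not_anc a b c : arc B a b -> arc B b c -> ~ anc a c.
Proof.
move=> ab bc ac.
have [pa [La [[ha hLa lba _ Lab] _]]] := arc_lastborn_sibling ab.
have [pb [Lb [[hb hLb lbb nLb Lbc] _]]] := arc_lastborn_sibling bc.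
have [nab nba] := arc_anc_incomparable ab.
have pbc : anc pb c := anc_trans (anc_par hLb) Lbc.
have [apb | pba] := anc_total ac pbc; first exact: nab (anc_trans apb (anc_par hb)).
have npba : pb != a by apply/eqP => E; apply: nab; rewrite -E; apply: anc_par hb.
have npab : pa != b by apply/eqP => E; apply: nba; rewrite -E; apply: anc_par ha.
have pab : anc pa b := anc_trans (anc_par hLa) Lab.
have E := anc_antisym (anc_strict_par pba npba ha) (anc_strict_par pab npab hb).
subst pb; have Lab_eq : La = b := sibling_anc hLa hb Lab.
by move: lbb nLb; rewrite lba Lab_eq => -[<-]; rewrite eqxx.
Qed.

Definition adjacent u v := arc B u v || arc B v u.

Lemma adjacent_not_anc u v : adjacent u v -> ~ anc u v.
Proof. by case/orP => /arc_anc_incomparable []. Qed.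

Lemma anc_adjacent z w w' :
  anc z w -> z != w -> adjacent w w' -> w' != z -> ~~ arc B w' z -> anc z w'.
Proof.
move=> zw nzw /orP [ww' | w'w] nw'z nw'z_arc; first exact: anc_arc zw nzw ww'.
have [p [L [[hw' hL _ _ Lw] conv]]] := arc_lastborn_sibling w'w.
have [zL | Lz] := anc_total zw Lw; last by move: nw'z_arc; rewrite conv.
have [zLeq | nzL] := eqVneq z L; first by subst L; move: nw'z_arc; rewrite conv ?anc_refl.
exact: anc_trans (anc_strict_par zL nzL hL) (anc_par hw').
Qed.

Lemma anc_ends_middle_arcs p m q :
  adjacent p m -> adjacent m q -> anc p q -> p != q -> arc B m p && arc B m q.
Proof.
move=> pm mq pq npq.
have mq_arc : arc B m q.
  by case/orP: mq => // qm; case: (adjacent_not_anc pm); apply: anc_arc pq npq qm.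
rewrite mq_arc andbT; case/orP: pm => // pm.
by case: (arc2_not_anc pm mq_arc pq).
Qed.

Lemma arc_depth r y : arc B r y -> depth r <= depth y.
Proof.
case/arc_lastborn_sibling=> p [L [[hr hL _ _ Ly] _]].
by rewrite (depth_par hr) -(depth_par hL); apply: anc_depth.
Qed.

Lemma arc_depth_lastborn r y s : arc B r y -> depth y <= depth r -> ~~ arc B y s.
Proof.
case/arc_lastborn_sibling=> p [L [[hr hL lbL _ Ly] _]] le.
have Ly_eq : L = y by apply: (anc_depth_eq Ly); rewrite (depth_par hL) -(depth_par hr).
by rewrite /arc -Ly_eq (bc_lastborn lbL) inE.
Qed.

End BurlingTree.

Section Cycles.
Variables (T : eqType) (s : seq T).
Hypothesis s_uniq : uniq s.

Lemma prev_eq_next u v : (u \in s) && (v == prev s u) = (v \in s) && (u == next s v).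
Proof.
apply/andP/andP => [[us /eqP ->] | [vs /eqP ->]];
  by split; rewrite ?mem_prev ?mem_next ?next_prev ?prev_next.
Qed.

Lemma next_neq_prev y : 3 <= size s -> y \in s -> next s y != prev s y.
Proof.
move=> sz /rot_to [i [|a [|b t]] Es]; try by move: sz; rewrite -(size_rot i) Es.
have : uniq (y :: a :: b :: t) by rewrite -Es rot_uniq.
rewrite /= !inE !negb_or => /and3P [/and3P [ya yb _] /andP [ab _] _].
have nnext : next s (next s y) = b.
  by rewrite -!(next_rot i s_uniq) Es /next /= eqxx eq_sym (negbTE ya) eqxx.
by apply: contra_neq yb => E; rewrite -nnext E (next_prev s_uniq).
Qed.

End Cycles.

Lemma hedge_rev (V : finType) (hs : seq V) : uniq hs -> hedge (rev hs) =2 hedge hs.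
Proof.
by move=> U u v; rewrite /hedge !mem_rev !next_rev // !(prev_eq_next U) orbC.
Qed.

Lemma connect_ind (T : finType) (e : rel T) (P : T -> Prop) x y :
  (forall a b, e a b -> P a -> P b) -> P x -> connect e x y -> P y.
Proof.
move=> step + /connectP [p pth ->]; elim: p x pth => //= a p IH x /andP [xa pth] Px.
exact: IH pth (step x a xa Px).
Qed.

Lemma cycle_walk (T : finType) (s : seq T) a (Q : T -> Prop) :
  uniq s -> a \in s -> Q (next s a) ->
  (forall c, c \in s -> c != a -> next s c != a -> Q c -> Q (next s c)) ->
  {in s, forall c, c != a -> Q c}.
Proof.
move=> s_uniq a_s Qa step c cs.
have conn : connect (frel (next s)) (next s a) c.
  by apply: (connect_cycle (cycle_next s_uniq)); rewrite ?mem_next.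
move: cs; apply: (connect_ind (P := fun c => c \in s -> c != a -> Q c) _ _ conn);
  last by move=> _ _.
move=> u v /eqP <- Qu.
rewrite mem_next => us nva; have [-> // | nua] := eqVneq u a.
exact: step us nua nva (Qu us nua).
Qed.

Section Holes.
Variables (T : finType) (adj : rel T) (hs : seq T).
Hypothesis hH : hole adj hs.

Lemma hole_uniq : uniq hs.
Proof. by case: hH. Qed.

Lemma hole_adjE y r : y \in hs -> r \in hs -> adj y r = (r == next hs y) || (r == prev hs y).
Proof.
case: hH => U _ adjE ys rs; rewrite adjE // /hedge ys /=.
by rewrite -(prev_eq_next U) ys.
Qed.

Lemma hole_adj_next y : y \in hs -> adj y (next hs y).
Proof. by move=> ys; rewrite hole_adjE ?mem_next ?eqxx. Qed.

Lemma hole_adj_prev y : y \in hs -> adj y (prev hs y).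
Proof. by move=> ys; rewrite hole_adjE ?mem_prev ?eqxx ?orbT. Qed.

Lemma hole_other_neighbor y r : y \in hs -> r \in hs -> adj y r ->
  exists2 t, t \in hs & [/\ adj y t, t != r
    & forall r', r' \in hs -> adj y r' -> r' = r \/ r' = t].
Proof.
case: hH => U sz _ ys rs; have np := next_neq_prev U (ltnW sz) ys.
rewrite hole_adjE // => /orP [/eqP -> | /eqP ->].
- exists (prev hs y); rewrite ?mem_prev // eq_sym; split => //; first exact: hole_adj_prev.
  by move=> r' r's; rewrite hole_adjE // => /orP [/eqP | /eqP]; [left | right].
- exists (next hs y); rewrite ?mem_next //; split => //; first exact: hole_adj_next.
  by move=> r' r's; rewrite hole_adjE // => /orP [/eqP | /eqP]; [right | left].
Qed.

End Holes.

Lemma hole_rev (T : finType) (adj : rel T) hs : hole adj hs -> hole adj (rev hs).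
Proof.
case=> U sz adjE; split; rewrite ?rev_uniq ?size_rev // => u v.
by rewrite !mem_rev hedge_rev //; apply: adjE.
Qed.

Section BurlingHoles.
Variables (V : finType) (B : burling_tree V) (S : {set V}).
Local Notation anc := (ancestor (par B)).
Local Notation G := (ugraph B S).
Implicit Types (hs : seq V) (a r t u v w x y z : V).

Lemma ugraph_sym u v : G u v = G v u.
Proof. by rewrite /ugraph andbCA orbC. Qed.

Lemma ugraph_adjacent u v : G u v -> adjacent B u v.
Proof. by case/and3P. Qed.

Lemma ugraph_neq u v : G u v -> u != v.
Proof.
move/ugraph_adjacent/adjacent_not_anc; apply: contra_not_neq => ->; exact: anc_refl.
Qed.

Lemma ugraphE u v : u \in S -> v \in S -> G u v = adjacent B u v.
Proof. by rewrite /ugraph => -> ->. Qed.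

Lemma hole_mem_S hs y : hole G hs -> y \in hs -> y \in S.
Proof. by move=> hH ys; case/and3P: (hole_adj_next hH ys). Qed.

Lemma hole_adjacentE hs y r : hole G hs -> y \in hs -> r \in hs -> G y r = adjacent B y r.
Proof. by move=> hH ys rs; rewrite ugraphE ?(hole_mem_S hH). Qed.

Lemma hsourceP hs y : hole G hs -> y \in hs ->
  reflect {in hs, forall r, G y r -> arc B y r} (hsource B hs y).
Proof.
move=> hH ys; rewrite /hsource ys /=; apply: (iffP andP) => [[yn yp] r rs | H].
  by rewrite (hole_adjE hH) // => /orP [/eqP -> | /eqP ->].
by split; apply: H; rewrite ?mem_next ?mem_prev ?(hole_adj_next hH) ?(hole_adj_prev hH).
Qed.

Lemma hsinkP hs y : hole G hs -> y \in hs ->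
  reflect {in hs, forall r, G y r -> arc B r y} (hsink B hs y).
Proof.
move=> hH ys; rewrite /hsink ys /=; apply: (iffP andP) => [[yn yp] r rs | H].
  by rewrite (hole_adjE hH) // => /orP [/eqP -> | /eqP ->].
by split; apply: H; rewrite ?mem_next ?mem_prev ?(hole_adj_next hH) ?(hole_adj_prev hH).
Qed.

Lemma hsource_arc hs a v : hole G hs -> hsource B hs a -> v \in hs -> G a v -> arc B a v.
Proof. by move=> hH sa; have /and3P [a_s _ _] := sa; apply: (hsourceP hH a_s). Qed.

Lemma hole_walk_anc hs a : hole G hs -> a \in hs ->
  anc (prev hs a) (next hs a) ->
  {in hs, forall y, y != a -> ~~ G y (prev hs a) -> anc (prev hs a) y}.
Proof.
move=> hH a_s uv; set u := prev hs a; have U := hole_uniq hH.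
have us : u \in hs by rewrite mem_prev.
have nu : next hs u = a by rewrite (next_prev U).
pose Q c := c = u \/ G c u \/ anc u c.
suff HQ : {in hs, forall c, c != a -> Q c}.
  move=> y ys nya nyu; case: (HQ y ys nya) => [-> | [yu | //]]; first exact: anc_refl.
  by rewrite yu in nyu.
apply: cycle_walk => //; first by right; right.
move=> c cs nca nnca Qc.
have [ncu | nncu] := eqVneq (next hs c) u; first by left.
case ncuG : (G (next hs c) u); first by right; left.
right; right; case: Qc => [cu | [cuG | uc]].
- by move: nnca; rewrite cu nu eqxx.
- move: cuG; rewrite ugraph_sym (hole_adjE hH) // => /orP [/eqP cE | /eqP cE].
    by move: nca; rewrite cE nu eqxx.
  by move: nncu; rewrite cE (next_prev U) eqxx.
- have nuc : u != c by apply: contraNneq nnca => <-; rewrite nu.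
  apply: anc_adjacent uc nuc _ nncu _.
    by rewrite -(hole_adjacentE hH) ?mem_next //; apply: hole_adj_next.
  by move: ncuG; rewrite (hole_adjacentE hH) ?mem_next // => /negbT; rewrite negb_or => /andP [].
Qed.

Lemma hsource_upper hs a : hole G hs -> hsource B hs a -> exists2 u, G a u &
  [/\ u \in hs, {in hs, forall v, G a v -> anc u v}
    & {in hs, forall y, y != a -> ~~ G y u -> anc u y}].
Proof.
move=> hH /and3P [a_s an ap]; have U := hole_uniq hH.
have nbrs v : v \in hs -> G a v -> v = next hs a \/ v = prev hs a.
  by move=> vs; rewrite (hole_adjE hH) // => /orP [/eqP | /eqP]; [left | right].
case: (arc_comparable ap an) => [pn | np].
- exists (prev hs a); first exact: hole_adj_prev.
  split; rewrite ?mem_prev //; last exact: hole_walk_anc.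
  by move=> v vs /(nbrs v vs) [] -> //; apply: anc_refl.
- exists (next hs a); first exact: hole_adj_next.
  split; rewrite ?mem_next //.
    by move=> v vs /(nbrs v vs) [] -> //; apply: anc_refl.
  move=> y ys; have := hole_walk_anc (hole_rev hH) (a := a).
  by rewrite !(prev_rev U) (next_rev U) mem_rev => /(_ a_s np y); rewrite mem_rev; apply.
Qed.

Lemma hsource_top hs a x : hole G hs -> hsource B hs a ->
  x \in hs -> ~~ hsource B hs x -> {in hs, forall z, anc z x -> z = x} ->
  [/\ G a x, {in hs, forall v, G a v -> anc x v}
    & {in hs, forall y, y != a -> ~~ G y x -> anc x y}].
Proof.
move=> hH sa xs nsx top; have /and3P [a_s _ _] := sa.
have [u au [us below walk]] := hsource_upper hH sa.
suff ux : anc u x by rewrite -(top u us ux).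
have nxa : x != a by apply: contraNneq nsx => ->.
have [xu | nxu] := boolP (G x u); last exact: walk.
have uxG : G u x by rewrite ugraph_sym.
have uaG : G u a by rewrite ugraph_sym.
have [t ts [xt ntu xnbrs]] := hole_other_neighbor hH xs us xu.
have [ta | nta] := eqVneq t a; first by apply: below; rewrite // ugraph_sym -ta.
have ntuG : ~~ G t u.
  have [t' _ [_ _ unbrs]] := hole_other_neighbor hH us a_s uaG.
  apply/negP; rewrite ugraph_sym => /(unbrs t ts) [/eqP | tt']; first by rewrite (negbTE nta).
  case: (unbrs x xs uxG) => [/eqP | xt']; first by rewrite (negbTE nxa).
  by move: (ugraph_neq xt); rewrite tt' -xt' eqxx.
have unt : u != t by rewrite eq_sym.
have /andP [xu_arc xt_arc] := anc_ends_middle_arcs (ugraph_adjacent uxG)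
  (ugraph_adjacent xt) (walk t ts nta ntuG) unt.
by case/negP: nsx; apply/(hsourceP hH xs) => r rs /(xnbrs r rs) [] ->.
Qed.

(* If r points into a vertex w of minimum depth, then w is the last-born sibling of r, so
   r has minimum depth too; as r is not a last-born, nothing points into r. *)
Lemma exists_hsource hs : hole G hs -> exists w, hsource B hs w.
Proof.
move=> hH; have [_ sz _] := hH.
have [w0 w0s] : exists w0, w0 \in hs by case: hs sz {hH} => // w0 hs _; exists w0; apply: mem_head.
have [w ws wmin] := arg_minnP (P := [in hs]) (depth B) w0s.
have [sw | nsw] := boolP (hsource B hs w); first by exists w.
have [r rs [wr nwr]] : exists2 r, r \in hs & G w r /\ ~~ arc B w r.
  move: nsw; rewrite /hsource ws /= negb_and => /orP [h | h].
    by exists (next hs w); [rewrite mem_next | split; rewrite ?(hole_adj_next hH)].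
  by exists (prev hs w); [rewrite mem_prev | split; rewrite ?(hole_adj_prev hH)].
have rw : arc B r w by move: (ugraph_adjacent wr); rewrite /adjacent (negbTE nwr).
have dr : depth B r = depth B w by apply/eqP; rewrite eqn_leq arc_depth // wmin.
exists r; apply/(hsourceP hH rs) => q qs rq; case/orP: (ugraph_adjacent rq) => // qr.
by have := arc_depth_lastborn w qr; rewrite dr wmin // rw => /(_ isT).
Qed.

(* Every antenna points to x; the other neighbour t of x points to x and to its own other
   neighbour, which lies below x, so t is the second antenna. *)
Lemma hole_top_pivot hs x : hole G hs -> x \in hs -> ~~ hsource B hs x ->
  {in hs, forall z, anc z x -> z = x} -> pivot B hs x.
Proof.
move=> hH xs nsx top.
have [w sw] := exists_hsource hH; have /and3P [ws _ _] := sw.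
have [wx below walk] := hsource_top hH sw xs nsx top.
have xw : G x w by rewrite ugraph_sym.
have [t ts [xt ntw xnbrs]] := hole_other_neighbor hH xs ws xw.
have tx : G t x by rewrite ugraph_sym.
have [s ss [ts_ nsx_ tnbrs]] := hole_other_neighbor hH ts xs tx.
have nsw : s != w.
  apply/eqP=> sw'; apply: (adjacent_not_anc (ugraph_adjacent xt)).
  by apply: below; rewrite // ugraph_sym -sw'.
have nsxG : ~~ G s x.
  apply/negP; rewrite ugraph_sym => /(xnbrs s ss) [sw' | st]; first by rewrite sw' eqxx in nsw.
  by move: (ugraph_neq ts_); rewrite st eqxx.
have xns : x != s by rewrite eq_sym.
have /andP [tx_arc ts_arc] := anc_ends_middle_arcs (ugraph_adjacent xt)
  (ugraph_adjacent ts_) (walk s ss nsw nsxG) xns.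
have st : hsource B hs t by apply/(hsourceP hH ts) => r rs /(tnbrs r rs) [] ->.
split.
- apply/(hsinkP hH xs) => r rs /(xnbrs r rs) [] -> //.
  by apply: (hsource_arc hH sw) => //; rewrite ugraph_sym.
- move=> a sa; have [ax _ _] := hsource_top hH sa xs nsx top.
  by rewrite (hsource_arc hH sa xs ax) orbT.
- move=> y ys nsy; have [yw | nyw] := eqVneq y w; first by rewrite yw sw in nsy.
  apply: walk => //; apply/negP; rewrite ugraph_sym => /(xnbrs y ys) [yw | yt].
    by rewrite yw eqxx in nyw.
  by rewrite yt st in nsy.
Qed.

Lemma subordinate_anc hs x : hole G hs -> subordinate B hs x ->
  exists z, [/\ z \in hs, z != x & anc z x].
Proof.
move=> hH [xs nsx npx]; apply: NNPP => nz; apply: npx.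
apply: hole_top_pivot => // z zs zx; apply: NNPP => nzx; apply: nz.
by exists z; split => //; apply/eqP.
Qed.

End BurlingHoles.

Section Dumbbells.
Variable V : finType.
Implicit Types (hs ps : seq V) (u v x : V).

Lemma hedge_notin hs u v : u \notin hs -> ~~ hedge hs u v.
Proof.
move=> nu; rewrite /hedge (negbTE nu) /=; apply/andP => -[vs /eqP uE].
by move: nu; rewrite uE mem_next vs.
Qed.

Lemma pedge_notin ps u v : v \notin ps -> ~~ pedge ps u v.
Proof.
move=> nv; apply/orP => -[] /mem_infix sub; case/negP: nv; apply: sub.
  by rewrite !inE eqxx orbT.
by rewrite mem_head.
Qed.

Lemma hedge_sym hs u v : hedge hs u v = hedge hs v u.
Proof. by rewrite /hedge orbC. Qed.

Lemma pedge_sym ps u v : pedge ps u v = pedge ps v u.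
Proof. by rewrite /pedge orbC. Qed.

Lemma pedge_rev ps : pedge (rev ps) =2 pedge ps.
Proof. by move=> u v; rewrite /pedge -!infix_revLR orbC. Qed.

Lemma dumbbell_rev (adj : rel V) S hs hs' ps x x' :
  dumbbell adj S hs hs' ps x x' -> dumbbell adj S hs' hs (rev ps) x' x.
Proof.
case=> [[hH hH'] [Ups hps lps sps] [I1 I2 I3] SE adjE].
case: ps hps Ups lps sps I1 I2 SE adjE => // a ps [->] Ups lps sps I1 I2 SE adjE.
have revE : [set v | v \in rev (x :: ps)] = [set v | v \in x :: ps].
  by apply/setP => v; rewrite !inE mem_rev.
have adj_sym : symmetric adj.
  by move=> u v; rewrite !adjE (hedge_sym hs) (hedge_sym hs') (pedge_sym (x :: ps)).
split=> //.
- split; rewrite ?rev_uniq //.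
  + by rewrite lastI rev_rcons -lps.
  + by rewrite rev_cons last_rcons.
  + by rewrite rev_sorted; apply: sub_sorted sps => u v; rewrite /= adj_sym.
- by split; rewrite ?revE // setIC I3 setIC.
- by rewrite SE; apply/setP => v; rewrite !inE !mem_cat mem_rev orbCA.
- by move=> u v; rewrite adjE pedge_rev orbCA.
Qed.


Lemma dumbbell_meet (adj : rel V) S hs hs' ps x x' k :
  dumbbell adj S hs hs' ps x x' -> k \in hs -> k \in ps ++ hs' -> k = x.
Proof.
case=> _ _ [I1 _ I3] _ _ ks; rewrite mem_cat => /orP [kp | kh'].
  by move/setP/(_ k): I1; rewrite !inE ks kp => /esym/eqP.
by move/setP/(_ k): I3; rewrite !inE ks kh' => /esym/andP [/eqP].
Qed.

Lemma dumbbell_nonadj (adj : rel V) S hs hs' ps x x' u v :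
  dumbbell adj S hs hs' ps x x' -> u \notin hs -> v \notin ps ++ hs' -> ~~ adj u v.
Proof.
case=> _ _ _ _ adjE nu; rewrite mem_cat negb_or => /andP [nvp nvh'].
rewrite adjE; apply/or3P => -[]; apply/negP;
  by [apply: hedge_notin | rewrite hedge_sym; apply: hedge_notin | apply: pedge_notin].
Qed.

Lemma dumbbell_connect (adj : rel V) S hs hs' ps x x' :
  dumbbell adj S hs hs' ps x x' ->
  {in hs', forall k, connect [rel a b | adj a b && (b \in ps ++ hs')] x k}.
Proof.
case=> [[_ hH'] [_ hps lps sps] [_ I2 _] _ _] k kh'.
have x'h' : x' \in hs' by move/setP/(_ x'): I2; rewrite !inE eqxx => /andP [].
clear I2.
apply: (@connect_trans _ _ x').
- case: ps hps lps sps => // a ps [->] <- sps; apply: path_connect (mem_last x ps).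
  apply: (sub_in_path (P := [in (x :: ps) ++ hs'])) sps.
    by move=> u v _ vD uv; rewrite /= uv vD.
  by apply/allP => u up; rewrite mem_cat up.
- apply: (connect_cycle _ x'h' kh').
  apply: (sub_in_cycle (P := [in hs'])) (cycle_next (hole_uniq hH')); last exact/allP.
  by move=> u v uh' _ /eqP <-; rewrite /= (hole_adj_next hH') // mem_cat mem_next uh' orbT.
Qed.

End Dumbbells.

Section DumbbellAncestry.
Variables (V : finType) (B : burling_tree V) (S : {set V}).
Local Notation anc := (ancestor (par B)).
Local Notation G := (ugraph B S).

Lemma dumbbell_anc_spread hs hs' ps x x' z :
  dumbbell G S hs hs' ps x x' -> z \in hs -> z != x -> anc z x ->
  {in hs', forall k, anc z k}.
Proof.
move=> D zs nzx zx; have [[hH _] _ _ _ _] := D.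
have nzD : z \notin ps ++ hs' by apply: contra nzx => zD; rewrite (dumbbell_meet D zs zD).
have step a b : G a b && (b \in ps ++ hs') -> anc z a /\ a != z -> anc z b /\ b != z.
  case/andP=> ab bD [za naz]; have [-> | nbx] := eqVneq b x; first by rewrite eq_sym.
  have nbs : b \notin hs by apply: contra nbx => bs; rewrite (dumbbell_meet D bs bD).
  have nbz : b != z by apply: contraNneq nbs => ->.
  split=> //; apply: anc_adjacent za _ (ugraph_adjacent ab) nbz _; first by rewrite eq_sym.
  have /and3P [_ bS _] := ab; have zS := hole_mem_S hH zs.
  by move: (dumbbell_nonadj D nbs nzD); rewrite ugraphE // /adjacent negb_or => /andP [].
move=> k /(dumbbell_connect D) xk; have xz : x != z by rewrite eq_sym.
by have [] := connect_ind step (conj zx xz) xk.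
Qed.

End DumbbellAncestry.

Theorem lemma6p2 (V : finType) (B : burling_tree V) (S : {set V})
    (hs hs' ps : seq V) (x x' : V) :
  dumbbell (ugraph B S) S hs hs' ps x x' ->
  ~ subordinate B hs x \/ ~ subordinate B hs' x'.
Proof.
move=> D; apply: not_and_or => -[sx sx'].
have [[hH hH'] _ _ _ _] := D.
have [z [zs nzx zx]] := subordinate_anc hH sx.
have [z' [z's nzx' zx']] := subordinate_anc hH' sx'.
have zz' : z = z'.
  apply: (anc_antisym (dumbbell_anc_spread D zs nzx zx z's)).
  exact: (dumbbell_anc_spread (dumbbell_rev D) z's nzx' zx' zs).
by move/eqP: nzx; apply; apply: (dumbbell_meet D zs); rewrite mem_cat zz' z's orbT.
Qed.
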